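(* Let $\mathcal{W}=(A,\to,\mathbb{S},\mathsf{f}_{\mathtt{NF}},\mathsf{Aggr})$ be a wARS. Then $\mathcal{W}$ is bounded if all of the following hold: (1) the sARS $(A,\to)$ is terminating, finitely non-deterministic, and finitely branching; (2) the semiring $\mathbb{S}$ has the extremal property; (3) $\mathsf{f}_{\mathtt{NF}}(a)\neq\top$ for all $a\in\mathtt{NF}_\to$; and (4) all aggregators $\mathsf{Aggr}_{a\to B}$ are finite aggregators that do not use $\top$ as a constant.
   Context: A semiring $\mathbb{S}=(S,\oplus,\odot,\mathbf{0},\mathbf{1})$: $(S,\oplus,\mathbf{0})$ commutative monoid, $(S,\odot,\mathbf{1})$ monoid, $\odot$ distributes over $\oplus$, $\mathbf{0}$ annihilator. Natural order: $s\preccurlyeq t$ iff $s\oplus u=t$ for some $u$. A complete lattice semiring is one where $\preccurlyeq$ is antisymmetric and every subset $T\subseteq S$ has a least upper bound $\bigsqcup T$; $\top=\bigsqcup S$. Infinite sums/products of a sequence are the suprema of the finite partial sums/products. A function $f:S^n\to S$ ($n\in\mathbb{N}$) has the extremal property if $f(e_1,\dots,e_n)\neq\top$ whenever $e_1,\dots,e_n\in S\setminus\{\top\}$; the semiring has the extremal property if $\oplus$ and $\odot$ do. $\mathrm{Seq}(X)$: non-empty finite or infinite sequences over $X$. An sARS is $(A,\to)$ with $\to\subseteq A\times\mathrm{Seq}(A)$; $\mathtt{NF}_\to$ is the set of $a$ with no $B$ such that $a\to B$. It is finitely non-deterministic if each $a$ has only finitely many $B$ with $a\to B$, and finitely branching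 if $B$ is finite whenever $a\to B$. An $(A,\to)$-reduction tree (RT) is a labeled ordered tree (possibly of infinite depth) whose nodes $v$ carry labels $a_v\in A$ and whose ordered child sequence $vE$ is either empty or satisfies $a_v\to[a_w\mid w\in vE]$; $(A,\to)$ is terminating if all RTs have finite depth. Aggregators: smallest set containing constants $s\in S$, variables $v_1,v_2,\dots$, and $\bigoplus F$, $\bigodot F$ for non-empty finite or infinite sequences $F$ of aggregators; an aggregator is finite if it is constructed only from finite sequences $F$. Aggregators induce functions by substituting the $i$-th argument for $v_i$. A wARS $(A,\to,\mathbb{S},\mathsf{f}_{\mathtt{NF}},\mathsf{Aggr})$ consists of an sARS, a complete lattice semiring $\mathbb{S}$, a map $\mathsf{f}_{\mathtt{NF}}:\mathtt{NF}_\to\to S$, and for each $a\to B$ an aggregator $\mathsf{Aggr}_{a\to B}$ with variable indices $\le|B|$, viewed as a function $S^{|B|}\to S$. Weight of a finite-depth RT $\mathfrak{T}$ at node $v$: $\mathsf{f}_{\mathtt{NF}}(a_v)$ if $a_v\in\mathtt{NF}_\to$; $\mathbf{0}$ if $v$ is a leaf with $a_v\notin\mathtt{NF}_\to$; $\mathsf{Aggr}_{a_v\to B}[$weights of the children in order$]$ with $B=[a_w\mid w\in vE]$ otherwise; $[\![\mathfrak{T}]\!]$ is the weight at the root. $[\![a]\!]=\bigsqcup\{[\![\mathfrak{T}]\!]\mid\mathfrak{T}$ a finite-depth RT with root labeled $a\}$. The wARS is bounded if $[\![a]\!]\neq\top$ for all $a\in A$. *)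

From Stdlib Require Import List Arith ClassicalEpsilon.
Import ListNotations.
Set Implicit Arguments.

Record csemiring := CSemiring {
  car :> Type;
  sadd : car -> car -> car;
  smul : car -> car -> car;
  szero : car;
  sone : car;
  sadd_assoc : forall x y z, sadd x (sadd y z) = sadd (sadd x y) z;
  sadd_comm : forall x y, sadd x y = sadd y x;
  sadd_0l : forall x, sadd szero x = x;
  smul_assoc : forall x y z, smul x (smul y z) = smul (smul x y) z;
  smul_1l : forall x, smul sone x = x;
  smul_1r : forall x, smul x sone = x;
  smul_addl : forall x y z, smul (sadd x y) z = sadd (smul x z) (smul y z);
  smul_addr : forall x y z, smul x (sadd y z) = sadd (smul x y) (smul x z);
  smul_0l : forall x, smul szero x = szero;
  smul_0r : forall x, smul x szero = szero;
  (* natural order s <= t iff s + u = t for some u; antisymmetric *)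
  sle_antisym : forall x y, (exists u, sadd x u = y) -> (exists u, sadd y u = x) -> x = y;
  ssup : (car -> Prop) -> car;
  ssup_ub : forall (T : car -> Prop) x, T x -> exists u, sadd x u = ssup T;
  ssup_least : forall (T : car -> Prop) y,
      (forall x, T x -> exists u, sadd x u = y) -> exists u, sadd (ssup T) u = y
}.

Definition sle (K : csemiring) (x y : K) : Prop := exists u, sadd K x u = y.
Definition stop (K : csemiring) : K := ssup K (fun _ => True).

Definition extremal (K : csemiring) : Prop :=
  (forall x y : K, x <> stop K -> y <> stop K -> sadd K x y <> stop K) /\
  (forall x y : K, x <> stop K -> y <> stop K -> smul K x y <> stop K).

Inductive Seq (X : Type) : Type :=
| SFin : X -> list X -> Seq X
| SInf : (nat -> X) -> Seq X.
Arguments SFin {X}. Arguments SInf {X}.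

Definition seq_len X (B : Seq X) : option nat :=
  match B with SFin _ l => Some (S (length l)) | SInf _ => None end.

Definition is_finite_seq X (B : Seq X) : Prop :=
  match B with SFin _ _ => True | SInf _ => False end.

(* AVar i stands for the variable v_(i+1) *)
Inductive aggr (S : Type) : Type :=
| ACst : S -> aggr S
| AVar : nat -> aggr S
| ASum : Seq (aggr S) -> aggr S
| AProd : Seq (aggr S) -> aggr S.
Arguments ACst {S}. Arguments AVar {S}. Arguments ASum {S}. Arguments AProd {S}.

Definition fsum (K : csemiring) (x : K) (l : list K) : K := fold_left (sadd K) l x.
Definition fprod (K : csemiring) (x : K) (l : list K) : K := fold_left (smul K) l x.

Definition isum (K : csemiring) (f : nat -> K) : K :=
  ssup K (fun s => exists n, s = fsum K (f 0) (map (fun j => f (S j)) (seq 0 n))).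
Definition iprod (K : csemiring) (f : nat -> K) : K :=
  ssup K (fun s => exists n, s = fprod K (f 0) (map (fun j => f (S j)) (seq 0 n))).

Fixpoint aeval (K : csemiring) (rho : nat -> K) (g : aggr K) : K :=
  let fix evl (l : list (aggr K)) : list K :=
      match l with [] => [] | x :: l' => aeval K rho x :: evl l' end in
  match g with
  | ACst s => s
  | AVar i => rho i
  | ASum (SFin x l) => fsum K (aeval K rho x) (evl l)
  | ASum (SInf f) => isum K (fun n => aeval K rho (f n))
  | AProd (SFin x l) => fprod K (aeval K rho x) (evl l)
  | AProd (SInf f) => iprod K (fun n => aeval K rho (f n))
  end.

Fixpoint vars_ok (S : Type) (b : option nat) (g : aggr S) : Prop :=
  let fix alll (l : list (aggr S)) : Prop :=
      match l with [] => True | x :: l' => vars_ok b x /\ alll l' end in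
  match g with
  | ACst _ => True
  | AVar i => match b with Some n => i < n | None => True end
  | ASum (SFin x l) | AProd (SFin x l) => vars_ok b x /\ alll l
  | ASum (SInf f) | AProd (SInf f) => forall n, vars_ok b (f n)
  end.

Fixpoint finite_aggr (S : Type) (g : aggr S) : Prop :=
  let fix alll (l : list (aggr S)) : Prop :=
      match l with [] => True | x :: l' => finite_aggr x /\ alll l' end in
  match g with
  | ACst _ | AVar _ => True
  | ASum (SFin x l) | AProd (SFin x l) => finite_aggr x /\ alll l
  | ASum (SInf _) | AProd (SInf _) => False
  end.

Fixpoint avoids_const (S : Type) (c : S) (g : aggr S) : Prop :=
  let fix alll (l : list (aggr S)) : Prop :=
      match l with [] => True | x :: l' => avoids_const c x /\ alll l' end in
  match g with
  | ACst s => s <> c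
  | AVar _ => True
  | ASum (SFin x l) | AProd (SFin x l) => avoids_const c x /\ alll l
  | ASum (SInf f) | AProd (SInf f) => forall n, avoids_const c (f n)
  end.

Section SARS.
Variable A : Type.
Variable step : A -> Seq A -> Prop.

Definition NF (a : A) : Prop := ~ exists B, step a B.

Definition fin_nondet : Prop :=
  forall a, exists L : list (Seq A), forall B, step a B -> In B L.

Definition fin_branching : Prop := forall a B, step a B -> is_finite_seq B.

(* Reduction trees, nodes = positions (lists of child indices, [] = root).
   dom = set of nodes, lab = labels, nch v = number of children of v
   (Some k: k children, None: infinitely many). *)
Definition lt_opt (i : nat) (o : option nat) : Prop :=
  match o with Some k => i < k | None => True end.

Definition child_seq X (o : option nat) (f : nat -> X) : option (Seq X) :=
  match o with
  | Some 0 => None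
  | Some (S k) => Some (SFin (f 0) (map (fun j => f (S j)) (seq 0 k)))
  | None => Some (SInf f)
  end.

Definition is_RT (dom : list nat -> Prop) (lab : list nat -> A)
    (nch : list nat -> option nat) : Prop :=
  dom [] /\
  (forall v i, dom (v ++ [i]) -> dom v) /\
  (forall v i, dom v -> (dom (v ++ [i]) <-> lt_opt i (nch v))) /\
  (forall v, dom v ->
     match child_seq (nch v) (fun i => lab (v ++ [i])) with
     | None => True
     | Some B => step (lab v) B
     end).

Definition depth_le (dom : list nat -> Prop) (n : nat) : Prop :=
  forall v, dom v -> length v <= n.

Definition terminating : Prop :=
  forall dom lab nch, is_RT dom lab nch -> exists n, depth_le dom n.

End SARS.

Section WARS.
Variable K : csemiring.
Variable A : Type.
Variable step : A -> Seq A -> Prop.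
Variable fNF : {a : A | NF step a} -> K.
Variable Aggr : A -> Seq A -> aggr K.

Definition leaf_val (a : A) : K :=
  match excluded_middle_informative (NF step a) with
  | left h => fNF (exist _ a h)
  | right _ => szero K
  end.

(* weight at node v, computed with fuel (fuel >= remaining height suffices) *)
Fixpoint wt (lab : list nat -> A) (nch : list nat -> option nat)
    (fuel : nat) (v : list nat) : K :=
  match fuel with
  | 0 => leaf_val (lab v)
  | S k =>
      match child_seq (nch v) (fun i => lab (v ++ [i])) with
      | None => leaf_val (lab v)
      | Some B => aeval K (fun i => wt lab nch k (v ++ [i])) (Aggr (lab v) B)
      end
  end.

Definition sem (a : A) : K :=
  ssup K (fun s => exists dom lab nch n,
     is_RT step dom lab nch /\ lab [] = a /\ depth_le dom n /\ s = wt lab nch n []).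

Definition bounded : Prop := forall a, sem a <> stop K.

End WARS.

(** Termination makes the relation "b occurs in a finite reduct of a" well-founded:
    otherwise repeatedly choosing a non-accessible child unfolds into a reduction
    tree of unbounded depth.  Along this relation one builds, for every object a, an
    element m(a) <> ⊤ dominating the weight of every node labelled a in every
    reduction tree: m(a) is the sum of the leaf value of a and, over the finitely many
    reductions a -> B, the aggregator of a -> B evaluated at the bounds of the
    children.  Finite aggregators are monotone in their arguments, and by the
    extremal property they stay below ⊤ on arguments below ⊤; so m(a) <> ⊤ and
    [[a]], the supremum of weights, is at most m(a). *)

From Stdlib Require Import List Arith Lia ClassicalEpsilon Classical.
Import ListNotations.

Section NaturalOrder.
Context {K : csemiring}.

Lemma sle_refl (x : K) : sle K x x.
Proof. exists (szero K). rewrite sadd_comm. apply sadd_0l. Qed.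

Lemma sle_trans (x y z : K) : sle K x y -> sle K y z -> sle K x z.
Proof. intros [u Hu] [w Hw]. exists (sadd K u w). rewrite sadd_assoc, Hu. exact Hw. Qed.

Lemma sle_addl (x y : K) : sle K x (sadd K x y).
Proof. exists y. reflexivity. Qed.

Lemma sle_addr (x y : K) : sle K y (sadd K x y).
Proof. exists x. apply sadd_comm. Qed.

Lemma sle_add (x y x' y' : K) :
  sle K x y -> sle K x' y' -> sle K (sadd K x x') (sadd K y y').
Proof.
  intros [u Hu] [w Hw]. subst. exists (sadd K u w).
  rewrite !sadd_assoc. f_equal. rewrite <- !sadd_assoc. f_equal. apply sadd_comm.
Qed.

Lemma sle_mul (x y x' y' : K) :
  sle K x y -> sle K x' y' -> sle K (smul K x x') (smul K y y').
Proof.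
  intros [u Hu] [w Hw]. subst.
  exists (sadd K (smul K x w) (smul K u (sadd K x' w))).
  rewrite smul_addl, !smul_addr, !sadd_assoc. reflexivity.
Qed.

Lemma sle_stop (x : K) : sle K x (stop K).
Proof. apply ssup_ub. exact I. Qed.

Lemma sle_neq_stop (x y : K) : sle K x y -> y <> stop K -> x <> stop K.
Proof. intros Hxy Hy Hx. subst. apply Hy, sle_antisym; [apply sle_stop | exact Hxy]. Qed.

Lemma szero_neq_stop (x : K) : x <> stop K -> szero K <> stop K.
Proof.
  intros Hx H0. apply (sle_neq_stop (stop K) x); [| exact Hx | reflexivity].
  rewrite <- H0. exists x. apply sadd_0l.
Qed.

Lemma fold_left_sle (op : K -> K -> K) :
  (forall x y x' y', sle K x y -> sle K x' y' -> sle K (op x x') (op y y')) ->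
  forall l l' x x', Forall2 (sle K) l l' -> sle K x x' ->
  sle K (fold_left op l x) (fold_left op l' x').
Proof. intros Hop l l' x x' H. revert x x'. induction H; simpl; auto. Qed.

Lemma fold_left_neq_stop (op : K -> K -> K) :
  (forall x y, x <> stop K -> y <> stop K -> op x y <> stop K) ->
  forall l x, Forall (fun y => y <> stop K) l -> x <> stop K ->
  fold_left op l x <> stop K.
Proof. intros Hop l x H. revert x. induction H; simpl; auto. Qed.

Lemma sle_fsum_base (b : K) l : sle K b (fsum K b l).
Proof.
  unfold fsum. revert b. induction l as [|y l IH]; intros b; simpl.
  - apply sle_refl.
  - eapply sle_trans; [apply sle_addl | apply IH].
Qed.

Lemma sle_fsum_In (b t : K) l : In t l -> sle K t (fsum K b l).
Proof.
  unfold fsum. revert b. induction l as [|y l IH]; intros b; simpl; [contradiction|].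
  intros [<- | Ht].
  - eapply sle_trans; [apply sle_addr | apply sle_fsum_base].
  - apply IH, Ht.
Qed.

End NaturalOrder.

Section AggregatorInduction.
Variables (S : Type) (P : aggr S -> Prop).
Hypothesis HCst : forall s, P (ACst s).
Hypothesis HVar : forall i, P (AVar i).
Hypothesis HSumFin : forall x l, P x -> Forall P l -> P (ASum (SFin x l)).
Hypothesis HSumInf : forall f, (forall n, P (f n)) -> P (ASum (SInf f)).
Hypothesis HProdFin : forall x l, P x -> Forall P l -> P (AProd (SFin x l)).
Hypothesis HProdInf : forall f, (forall n, P (f n)) -> P (AProd (SInf f)).

Fixpoint aggr_ind_Forall (g : aggr S) : P g :=
  let fix go (l : list (aggr S)) : Forall P l :=
      match l with [] => Forall_nil _ | y :: l' => Forall_cons _ (aggr_ind_Forall y) (go l') end in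
  match g with
  | ACst s => HCst s
  | AVar i => HVar i
  | ASum (SFin x l) => HSumFin x l (aggr_ind_Forall x) (go l)
  | ASum (SInf f) => HSumInf f (fun n => aggr_ind_Forall (f n))
  | AProd (SFin x l) => HProdFin x l (aggr_ind_Forall x) (go l)
  | AProd (SInf f) => HProdInf f (fun n => aggr_ind_Forall (f n))
  end.

End AggregatorInduction.

(* [aeval], [finite_aggr], [vars_ok] and [avoids_const] unfold to these anonymous
   fixpoints on argument lists. *)
Lemma conj_list_Forall {X} (P : X -> Prop) (l : list X) :
  (fix go (l : list X) : Prop := match l with [] => True | y :: l' => P y /\ go l' end) l ->
  Forall P l.
Proof. induction l; simpl; intuition. Qed.

Lemma map_fix {X Y} (f : X -> Y) (l : list X) :
  (fix go (l : list X) : list Y := match l with [] => [] | y :: l' => f y :: go l' end) l =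
  map f l.
Proof. induction l; simpl; congruence. Qed.

Lemma Forall2_sle_map (K : csemiring) (f g : aggr K -> K) l :
  Forall (fun y => sle K (f y) (g y)) l -> Forall2 (sle K) (map f l) (map g l).
Proof. induction 1; simpl; constructor; auto. Qed.

Lemma aeval_sle (K : csemiring) n (rho rho' : nat -> K) (g : aggr K) :
  (forall i, i < n -> sle K (rho i) (rho' i)) ->
  finite_aggr g -> vars_ok (Some n) g -> sle K (aeval K rho g) (aeval K rho' g).
Proof.
  intros Hrho. induction g as [s|i|x l IHx IHl|f _|x l IHx IHl|f _] using aggr_ind_Forall;
    simpl; try rewrite !map_fix; try tauto.
  - intros. apply sle_refl.
  - auto.
  - intros [Hfx Hfl%conj_list_Forall] [Hvx Hvl%conj_list_Forall].
    apply fold_left_sle; [apply sle_add | | auto]. apply Forall2_sle_map.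
    induction IHl; inversion Hfl; inversion Hvl; auto.
  - intros [Hfx Hfl%conj_list_Forall] [Hvx Hvl%conj_list_Forall].
    apply fold_left_sle; [apply sle_mul | | auto]. apply Forall2_sle_map.
    induction IHl; inversion Hfl; inversion Hvl; auto.
Qed.

Lemma aeval_neq_stop (K : csemiring) (rho : nat -> K) (g : aggr K) :
  extremal K -> (forall i, rho i <> stop K) ->
  finite_aggr g -> avoids_const (stop K) g -> aeval K rho g <> stop K.
Proof.
  intros [Hadd Hmul] Hrho.
  induction g as [s|i|x l IHx IHl|f _|x l IHx IHl|f _] using aggr_ind_Forall;
    simpl; try rewrite !map_fix; try tauto.
  - auto.
  - intros [Hfx Hfl%conj_list_Forall] [Hcx Hcl%conj_list_Forall].
    apply fold_left_neq_stop; auto. apply Forall_map.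
    induction IHl; inversion Hfl; inversion Hcl; auto.
  - intros [Hfx Hfl%conj_list_Forall] [Hcx Hcl%conj_list_Forall].
    apply fold_left_neq_stop; auto. apply Forall_map.
    induction IHl; inversion Hfl; inversion Hcl; auto.
Qed.

Definition Seq_nth {X} (B : Seq X) (i : nat) : X :=
  match B with SFin x l => nth i (x :: l) x | SInf f => f i end.

Lemma Seq_nth_child_seq {X} (h : nat -> X) n i :
  i < S n -> Seq_nth (SFin (h 0) (map (fun j => h (S j)) (seq 0 n))) i = h i.
Proof.
  intros Hi. destruct i as [|i]; [reflexivity|]. simpl.
  rewrite nth_indep with (d' := h 1) by (rewrite length_map, length_seq; lia).
  rewrite map_nth with (d := 0), seq_nth by lia. reflexivity.
Qed.

Lemma map_nth_seq {X} (l : list X) d : map (fun j => nth j l d) (seq 0 (length l)) = l.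
Proof.
  induction l as [|x l IH]; simpl; [reflexivity|].
  f_equal. rewrite <- seq_shift, map_map. exact IH.
Qed.

Section ChildRelation.
Variables (A : Type) (step : A -> Seq A -> Prop).

Definition child_of (b a : A) : Prop :=
  exists x l, step a (SFin x l) /\ In b (x :: l).

Lemma child_of_Seq_nth a B i :
  fin_branching step -> step a B -> child_of (Seq_nth B i) a.
Proof.
  intros Hfb HB. destruct B as [x l|f]; [|contradiction (Hfb _ _ HB)].
  exists x, l. split; [exact HB|]. change (In (nth i (x :: l) x) (x :: l)).
  destruct (Nat.lt_ge_cases i (S (length l))) as [Hi|Hi].
  - apply nth_In, Hi.
  - rewrite nth_overflow by exact Hi. left. reflexivity.
Qed.

Section Unfolding.
Variables (br : A -> list A) (root : A).
Hypothesis br_step : forall a x l, br a = x :: l -> step a (SFin x l).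

(* Positions are stored reversed: the index of the last edge is the head. *)
Fixpoint unfold_lab (r : list nat) : A :=
  match r with [] => root | i :: r' => nth i (br (unfold_lab r')) root end.

Fixpoint unfold_dom (r : list nat) : Prop :=
  match r with [] => True | i :: r' => unfold_dom r' /\ i < length (br (unfold_lab r')) end.

Lemma unfold_is_RT :
  is_RT step (fun v => unfold_dom (rev v)) (fun v => unfold_lab (rev v))
    (fun v => Some (length (br (unfold_lab (rev v))))).
Proof.
  split; [exact I | split; [| split]].
  - intros v i. rewrite rev_app_distr. simpl. tauto.
  - intros v i Hv. rewrite rev_app_distr. simpl. tauto.
  - intros v _. destruct (br (unfold_lab (rev v))) as [|x l] eqn:Ebr; [exact I|].
    simpl. rewrite rev_app_distr. simpl. rewrite Ebr.
    rewrite (map_ext _ (fun j => nth j l root))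
      by (intros j; rewrite rev_app_distr; simpl; rewrite Ebr; reflexivity).
    rewrite map_nth_seq. apply br_step, Ebr.
Qed.

End Unfolding.

Lemma terminating_wf_child_of : terminating step -> well_founded child_of.
Proof.
  intros Hterm root. apply NNPP. intros Hroot.
  pose (bad_children a L := exists x l, L = x :: l /\ step a (SFin x l) /\
                                      exists b, In b L /\ ~ Acc child_of b).
  assert (Hbad : forall a, ~ Acc child_of a -> exists L, bad_children a L).
  { intros a Ha. apply NNPP. intros HL. apply Ha. constructor. intros b [x [l [Hs Hb]]].
    apply NNPP. intros Hnb. apply HL. exists (x :: l), x, l. eauto 6. }
  pose (br a := if excluded_middle_informative (~ Acc child_of a)
                then epsilon (inhabits []) (bad_children a) else []).
  assert (Hbr : forall a, ~ Acc child_of a -> bad_children a (br a)).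
  { intros a Ha. unfold br. destruct excluded_middle_informative; [|contradiction].
    apply epsilon_spec, Hbad, Ha. }
  assert (br_step : forall a x l, br a = x :: l -> step a (SFin x l)).
  { intros a x l E. unfold br in E.
    destruct excluded_middle_informative as [Ha|]; [|discriminate].
    destruct (Hbr a Ha) as [x' [l' [E' [Hs _]]]]. unfold br in E'.
    destruct excluded_middle_informative; [|contradiction].
    rewrite E in E'. injection E' as -> ->. exact Hs. }
  destruct (Hterm _ _ _ (unfold_is_RT br root br_step)) as [n Hn].
  assert (Hdeep : forall m, exists r, unfold_dom br root r /\ length r = m /\
                                      ~ Acc child_of (unfold_lab br root r)).
  { induction m as [|m [r [Hr [Hlen Hna]]]]; [exists []; simpl; auto|].
    destruct (Hbr _ Hna) as [x [l [E [_ [b [Hb Hnb]]]]]].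
    destruct (In_nth _ _ root Hb) as [i [Hi Hib]].
    exists (i :: r). simpl. rewrite Hib. auto. }
  destruct (Hdeep (S n)) as [r [Hr [Hlen _]]].
  specialize (Hn (rev r)). cbv beta in Hn. rewrite rev_involutive, length_rev in Hn.
  specialize (Hn Hr). lia.
Qed.

Lemma exists_NF : terminating step -> fin_branching step -> forall a : A, exists b, NF step b.
Proof.
  intros Hterm Hfb a.
  induction a as [a IH] using (well_founded_ind (terminating_wf_child_of Hterm)).
  destruct (classic (NF step a)) as [Ha|Ha]; [eauto|].
  apply NNPP in Ha. destruct Ha as [B HB].
  apply (IH (Seq_nth B 0)), child_of_Seq_nth; assumption.
Qed.

End ChildRelation.

Arguments child_of {A}.
Arguments terminating_wf_child_of {A step}.
Arguments exists_NF {A step}.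

Section WeightBound.
Variables (K : csemiring) (A : Type) (step : A -> Seq A -> Prop).
Variables (fNF : {a : A | NF step a} -> K) (Aggr : A -> Seq A -> aggr K).
Hypothesis Hwars : forall a B, step a B -> vars_ok (seq_len B) (Aggr a B).
Hypothesis Hterm : terminating step.
Hypothesis Hfnd : fin_nondet step.
Hypothesis Hfb : fin_branching step.
Hypothesis Hext : extremal K.
Hypothesis Hnf : forall a : {a : A | NF step a}, fNF a <> stop K.
Hypothesis Hagg : forall a B, step a B ->
  finite_aggr (Aggr a B) /\ avoids_const (stop K) (Aggr a B).

Definition weight_le (a : A) (m : K) : Prop :=
  forall dom lab nch v k, is_RT step dom lab nch -> dom v -> lab v = a ->
  sle K (wt K fNF Aggr lab nch k v) m.

Definition step_bound (bnd : A -> K) (a : A) (B : Seq A) : K :=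
  if excluded_middle_informative (step a B)
  then aeval K (fun i => bnd (Seq_nth B i)) (Aggr a B) else szero K.

(* [a] only serves to produce a normal form, whose weight is not ⊤. *)
Lemma szero_neq_stop_of_inhabited (a : A) : szero K <> stop K.
Proof.
  destruct (exists_NF Hterm Hfb a) as [b Hb].
  exact (szero_neq_stop _ (Hnf (exist _ b Hb))).
Qed.

Lemma leaf_val_neq_stop (a : A) : leaf_val K fNF a <> stop K.
Proof.
  unfold leaf_val. destruct excluded_middle_informative; [apply Hnf|].
  apply (szero_neq_stop_of_inhabited a).
Qed.

Lemma step_bound_neq_stop (bnd : A -> K) a B :
  (forall b, child_of step b a -> bnd b <> stop K) -> step_bound bnd a B <> stop K.
Proof.
  intros Hbnd. unfold step_bound. destruct excluded_middle_informative as [HB|].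
  - apply aeval_neq_stop; try apply Hagg, HB; [exact Hext|].
    intros i. apply Hbnd, child_of_Seq_nth; assumption.
  - apply (szero_neq_stop_of_inhabited a).
Qed.

Lemma weight_le_step_bound (bnd : A -> K) a (L : list (Seq A)) :
  (forall B, step a B -> In B L) ->
  (forall b, child_of step b a -> weight_le b (bnd b)) ->
  weight_le a (fsum K (leaf_val K fNF a) (map (step_bound bnd a) L)).
Proof.
  intros HL Hbnd dom lab nch v k HRT Hv <-.
  destruct k as [|k]; simpl; [apply sle_fsum_base|].
  pose proof HRT as (_ & _ & Hdom & Hstep). specialize (Hstep v Hv).
  destruct (nch v) as [[|n]|] eqn:En; simpl in *;
    [apply sle_fsum_base | | contradiction (Hfb _ _ Hstep)].
  eapply sle_trans; [| apply sle_fsum_In, in_map, HL, Hstep].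
  unfold step_bound. destruct excluded_middle_informative as [_|]; [|contradiction].
  apply aeval_sle with (n := S n); [| apply Hagg, Hstep |].
  - intros i Hi.
    pose proof (Seq_nth_child_seq (fun i => lab (v ++ [i])) n i Hi) as Hnth.
    assert (Hchild : child_of step (lab (v ++ [i])) (lab v)).
    { rewrite <- Hnth. apply child_of_Seq_nth; assumption. }
    rewrite Hnth. apply (Hbnd _ Hchild dom lab nch); [exact HRT | | reflexivity].
    apply Hdom; [exact Hv | rewrite En; exact Hi].
  - pose proof (Hwars _ _ Hstep) as Hvars. simpl in Hvars.
    rewrite length_map, length_seq in Hvars. exact Hvars.
Qed.

Lemma weight_bound_exists (a : A) : exists m, m <> stop K /\ weight_le a m.
Proof.
  induction a as [a IH] using (well_founded_ind (terminating_wf_child_of Hterm)).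
  destruct (Hfnd a) as [L HL].
  pose (bnd b := epsilon (inhabits (szero K)) (fun m => m <> stop K /\ weight_le b m)).
  assert (Hbnd : forall b, child_of step b a -> bnd b <> stop K /\ weight_le b (bnd b)).
  { intros b Hb. apply epsilon_spec, IH, Hb. }
  exists (fsum K (leaf_val K fNF a) (map (step_bound bnd a) L)). split.
  - apply fold_left_neq_stop; [apply Hext | | apply leaf_val_neq_stop].
    apply Forall_forall. intros t (B & <- & _)%in_map_iff.
    apply step_bound_neq_stop. intros b Hb. apply Hbnd, Hb.
  - apply weight_le_step_bound; [exact HL|]. intros b Hb. apply Hbnd, Hb.
Qed.

End WeightBound.

Theorem theorem29 (K : csemiring) (A : Type) (step : A -> Seq A -> Prop)
    (fNF : {a : A | NF step a} -> K) (Aggr : A -> Seq A -> aggr K)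
    (* wARS well-formedness: variable indices of Aggr_{a -> B} are <= |B| *)
    (Hwars : forall a B, step a B -> vars_ok (seq_len B) (Aggr a B))
    (* (1) *)
    (Hterm : terminating step) (Hfnd : fin_nondet step) (Hfb : fin_branching step)
    (* (2) *)
    (Hext : extremal K)
    (* (3) *)
    (Hnf : forall a : {a : A | NF step a}, fNF a <> stop K)
    (* (4) *)
    (Hagg : forall a B, step a B ->
        finite_aggr (Aggr a B) /\ avoids_const (stop K) (Aggr a B)) :
  @bounded K A step fNF Aggr.
Proof.
  intros a.
  destruct (@weight_bound_exists K A step fNF Aggr Hwars Hterm Hfnd Hfb Hext Hnf Hagg a)
    as [m [Hm Hle]].
  apply (sle_neq_stop _ m); [| exact Hm].
  apply ssup_least. intros s (dom & lab & nch & n & HRT & Hroot & _ & ->).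
  apply (Hle dom lab nch [] n HRT); [apply HRT | exact Hroot].
Qed.
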